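(* Let $m\le n$ be positive integers, $A$ a Hermitian $n\times n$ matrix, and $v_1,\dots,v_m\in\mathbb C^n$ orthonormal vectors satisfying $(A-\lambda_jI)v_j=r_j$ for real scalars $\lambda_j$ and vectors $r_j\in\mathbb C^n$, $1\le j\le m$. Then there are $m$ eigenvalues $\alpha_1,\dots,\alpha_m$ of $A$ (counted with multiplicity), in one-to-one correspondence with the $\lambda_j$, such that $|\lambda_j-\alpha_j|\le2m\sup_{1\le i\le m}\|r_i\|_2$ for all $1\le j\le m$. *)

From mathcomp Require Import all_boot all_algebra.
From mathcomp Require Export reals.
From mathcomp.real_closed Require Export complex.
Import GRing.Theory Num.Theory.
Local Open Scope ring_scope.

Definition ctrmx {C : numClosedFieldType} {m n : nat} (A : 'M[C]_(m, n)) : 'M[C]_(n, m) :=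
  (map_mx Num.conj A)^T.

Definition hermitian_mx {C : numClosedFieldType} {n : nat} (A : 'M[C]_n) : Prop :=
  ctrmx A = A.

Definition cdot {C : numClosedFieldType} {n : nat} (u v : 'cV[C]_n) : C :=
  (ctrmx u *m v) 0 0.

(* Euclidean 2-norm of a column vector (a nonnegative real, as an element of C) *)
Definition norm2 {C : numClosedFieldType} {n : nat} (v : 'cV[C]_n) : C :=
  sqrtC (\sum_(i < n) `|v i 0| ^+ 2).

Definition orthonormal_fam {C : numClosedFieldType} {n m : nat} (v : 'I_m -> 'cV[C]_n) : Prop :=
  forall i j : 'I_m, cdot (v i) (v j) = (i == j)%:R.

Definition eigenvalues_with_mult {C : numClosedFieldType} {n : nat} (A : 'M[C]_n)
  (s : n.-tuple C) : Prop :=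
  char_poly A = \prod_(a <- s) ('X - a%:P).

(* Diagonalise A = P^-1 diag(d) P with P unitary; the eigenvalues of A are
   the d_i.  In these coordinates w_j = P v_j are orthonormal and
   (d_i - lambda_j) (w_j)_i = (P r_j)_i, a vector of norm at most
   e = max_j ||r_j||.  Call j and i close when |lambda_j - d_i| <= 2me.
   A matching of every j with a distinct close i is exactly the claim, so
   by Hall's marriage theorem it suffices that every set J of indices j is
   close to at least #|J| indices i.  If some J were close only to a smaller
   set N, a nonzero combination y of the w_j (j in J) would vanish on N
   (more unknowns than equations); by Parseval its mass sum_j |c_j|^2 lives
   off N, where every w_j is damped by the gap 2me, and Cauchy-Schwarz then
   gives 4m^2 e^2 <= m e^2, i.e. e = 0, after which y vanishes everywhere. *)

From mathcomp Require Import all_boot all_order all_algebra zify spectral.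
From mathcomp Require Import reals.
From mathcomp.real_closed Require Import complex.
Import GRing.Theory Num.Theory Order.TTheory.
Set Implicit Arguments. Unset Strict Implicit. Unset Printing Implicit Defensive.

Section HallMarriage.
Variables (T U : finType).
Implicit Types (adj : T -> U -> bool) (X J K : {set T}) (B : {set U}).

Definition nbh adj J : {set U} := [set y | [exists x in J, adj x y]].

Lemma mem_nbh adj J x y : x \in J -> adj x y -> y \in nbh adj J.
Proof. by move=> xJ a; rewrite inE; apply/existsP; exists x; rewrite xJ. Qed.

Lemma nbhU adj J K : nbh adj (J :|: K) = nbh adj J :|: nbh adj K.
Proof.
apply/setP=> y; rewrite !inE; apply/existsP/orP.
  case=> x /andP[]; rewrite inE => /orP[] xJK a; [left|right];
  by apply/existsP; exists x; rewrite xJK.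
by case=> /existsP[x /andP[xJK a]]; exists x; rewrite inE xJK ?orbT.
Qed.

Definition hall_cond adj X := forall J, J \subset X -> #|J| <= #|nbh adj J|.

Definition matching adj X (f : T -> U) :=
  {in X &, injective f} /\ {in X, forall x, adj x (f x)}.

Definition avoid adj B x y := adj x y && (y \notin B).

Lemma nbh_avoid adj B J : nbh (avoid adj B) J = nbh adj J :\: B.
Proof.
apply/setP=> y; rewrite [in LHS]inE in_setD [y \in nbh adj J]inE andbC.
apply/existsP/andP.
  by case=> x /and3P[xJ a yB]; split=> //; apply/existsP; exists x; rewrite xJ.
by case=> /existsP[x /andP[xJ a]] yB; exists x; rewrite xJ /avoid a.
Qed.

Lemma matching_glue adj X J B f g :
  J \subset X -> matching adj J f -> {in J, forall x, f x \in B} ->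
  matching (avoid adj B) (X :\: J) g ->
  matching adj X (fun x => if x \in J then f x else g x).
Proof.
move=> sJX [injf adjf] fB [injg adjg].
have XJ x : x \in X -> x \notin J -> x \in X :\: J by rewrite in_setD => -> ->.
have gB x : x \in X -> x \notin J -> g x \notin B.
  by move=> xX xJ; case/andP: (adjg x (XJ x xX xJ)).
split=> [x y xX yX|x xX] /=.
  case: ifP => xJ; case: ifP => yJ.
  - exact: injf.
  - by move=> fg; have := gB y yX (negbT yJ); rewrite -fg fB.
  - by move=> gf; have := gB x xX (negbT xJ); rewrite gf fB.
  - by apply: injg; apply: XJ; rewrite ?xJ ?yJ.
case: ifP => xJ; first exact: adjf.
by case/andP: (adjg x (XJ x xX (negbT xJ))).
Qed.

Lemma hall_cond_sub adj X J : J \subset X -> hall_cond adj X -> hall_cond adj J.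
Proof. by move=> sJX hX K sKJ; apply: hX (subset_trans sKJ sJX). Qed.

Lemma hall_cond_tight adj X J :
  J \subset X -> hall_cond adj X -> #|nbh adj J| <= #|J| ->
  hall_cond (avoid adj (nbh adj J)) (X :\: J).
Proof.
move=> sJX hX tightJ K; rewrite subsetD => /andP[sKX dKJ]; rewrite nbh_avoid.
have -> : nbh adj K :\: nbh adj J = nbh adj (K :|: J) :\: nbh adj J.
  by rewrite nbhU setDUl setDv setU0.
have := hX (K :|: J); rewrite subUset sKX sJX => /(_ isT).
rewrite cardsD (setIidPr _) ?nbhU ?subsetUr // cardsU (disjoint_setI0 dKJ) cards0.
lia.
Qed.

Lemma hall_cond_surplus adj X x y :
  (forall K, K \subset X :\ x -> K != set0 -> #|K| < #|nbh adj K|) ->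
  hall_cond (avoid adj [set y]) (X :\ x).
Proof.
move=> surplus K sK; rewrite nbh_avoid.
have [->|K0] := eqVneq K set0; first by rewrite cards0.
have := surplus K sK K0; have := cardsD1 y (nbh adj K); lia.
Qed.

Variable u0 : U.

(* Hall's theorem relative to X, by strong induction on #|X|: either some
   nonempty proper subset is tight and the two parts are matched
   separately, or any edge at any x can be used and the rest matched. *)
Lemma hall_in adj X : hall_cond adj X -> exists f, matching adj X f.
Proof.
have [k] := ubnP #|X|; elim: k adj X => // k IH adj X ltXk hX.
have [->|[x xX]] := set_0Vmem X.
  by exists (fun _ => u0); split=> ?; rewrite inE.
have [/existsP[J /and4P[sJX J0 JX tightJ]]|noTight] :=
  boolP [exists J : {set T},
           [&& J \subset X, J != set0, J != X & #|nbh adj J| <= #|J|]].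
  have ltJX : #|J| < #|X| by rewrite proper_card // properEneq JX.
  have [f mf] := IH adj J (leq_trans ltJX ltXk) (hall_cond_sub sJX hX).
  have [g mg] : exists g, matching (avoid adj (nbh adj J)) (X :\: J) g.
    apply: IH (hall_cond_tight sJX hX tightJ).
    by rewrite cardsD (setIidPr sJX); move: ltXk; rewrite -card_gt0 in J0; lia.
  exists (fun x => if x \in J then f x else g x); apply: matching_glue mg => //.
  by move=> z zJ; apply: mem_nbh zJ (mf.2 z zJ).
have surplus K : K \subset X :\ x -> K != set0 -> #|K| < #|nbh adj K|.
  move=> sK K0; rewrite ltnNge; apply: contraNN noTight => tightK.
  apply/existsP; exists K.
  rewrite K0 tightK (subset_trans sK (subsetDl _ _)) andbT /=.
  by apply: contraTneq xX => <-; apply/negP => /(subsetP sK); rewrite !inE eqxx.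
have [y] : exists y, y \in nbh adj [set x].
  by apply/set0Pn; rewrite -card_gt0 -(cards1 x) hX ?sub1set.
rewrite inE => /existsP[? /andP[/set1P-> axy]].
have [g mg] : exists g, matching (avoid adj [set y]) (X :\ x) g.
  apply: IH (hall_cond_surplus y surplus).
  by move: ltXk; rewrite (cardsD1 x) xX.
exists (fun z => if z \in [set x] then y else g z); apply: matching_glue mg.
- by rewrite sub1set.
- by split=> [? ? /set1P-> /set1P->|? /set1P->].
- by move=> ? _; rewrite inE.
Qed.

Lemma hall adj :
  (forall J, #|J| <= #|nbh adj J|) ->
  exists f : T -> U, injective f /\ forall x, adj x (f x).
Proof.
move=> hT; have [f [injf adjf]] := @hall_in adj setT (fun J _ => hT J).
by exists f; split=> [x y|x]; [apply: injf | apply: adjf]; rewrite inE.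
Qed.

End HallMarriage.

Local Open Scope ring_scope.

Section KernelComb.
Variable F : fieldType.

Lemma kernel_comb m n (w : 'I_m -> 'I_n -> F) (J : {set 'I_m}) (N : {set 'I_n}) :
  (#|N| < #|J|)%N ->
  exists c : 'I_m -> F, [/\ exists j, c j != 0, {in ~: J, forall j, c j = 0} &
    {in N, forall i, \sum_j c j * w j i = 0}].
Proof.
move=> ltNJ.
pose M := \matrix_(k < #|J|, l < #|N|) w (enum_val k) (enum_val l).
have : kermx M != 0.
  rewrite -mxrank_eq0 mxrank_ker subn_eq0 -ltnNge.
  exact: leq_ltn_trans (rank_leq_col M) ltNJ.
case/rowV0Pn => u /sub_kermxP uM /rV0Pn[k0 uk0].
pose c j := \sum_(k | j == enum_val k) u 0 k.
have sum_c (G : 'I_m -> F) : \sum_j c j * G j = \sum_k u 0 k * G (enum_val k).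
  rewrite (eq_bigr (fun j => \sum_(k | j == enum_val k) u 0 k * G j)); last first.
    by move=> j _; rewrite mulr_suml.
  rewrite (exchange_big_dep xpredT) //=; apply: eq_bigr => k _.
  by rewrite big_pred1_eq.
exists c; split.
- exists (enum_val k0); rewrite /c (big_pred1 k0) // => k.
  by rewrite (inj_eq enum_val_inj) eq_sym.
- move=> j; rewrite inE => jJ; apply: big_pred0 => k.
  by apply: contraNF jJ => /eqP->; apply: enum_valP.
- move=> i iN; have /matrixP/(_ 0 (enum_rank_in iN i)) := uM.
  rewrite sum_c !mxE => uMi; rewrite -[RHS]uMi.
  by apply: eq_bigr => k _; rewrite mxE enum_rankK_in.
Qed.

End KernelComb.

Section NormEstimates.
Variable R : numDomainType.

Lemma bigmax_ge0 (I : Type) (r : seq I) (F : I -> R) :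
  (forall i, 0 <= F i) -> 0 <= \big[Num.max/0]_(i <- r) F i.
Proof.
move=> F0; apply: (big_ind (fun x => 0 <= x)) => // x y x0 y0.
by rewrite comparable_le_max ?x0 // real_comparable ?ger0_real.
Qed.

Lemma le_bigmax_nneg (I : finType) (F : I -> R) (j : I) :
  (forall i, 0 <= F i) -> F j <= \big[Num.max/0]_i F i.
Proof.
move=> F0; suff : forall r, j \in r -> F j <= \big[Num.max/0]_(i <- r) F i.
  by apply; rewrite mem_index_enum.
elim=> // a r IH; rewrite in_cons big_cons.
have cmp : (F a >=< \big[Num.max/0]_(i <- r) F i)%O.
  by rewrite real_comparable ?ger0_real ?bigmax_ge0.
by case/predU1P=> [->|jr]; rewrite comparable_le_max ?lexx ?IH ?orbT.
Qed.

Lemma sqr_norm_sum_le m (a : 'I_m -> R) :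
  `|\sum_j a j| ^+ 2 <= m%:R * \sum_j `|a j| ^+ 2.
Proof.
apply: le_trans (_ : (\sum_j `|a j|) ^+ 2 <= _).
  by rewrite ler_sqr ?nnegrE ?sumr_ge0 // ler_norm_sum.
rewrite -(ler_pMn2r (n := 2%N)) //.
have -> : (\sum_j `|a j|) ^+ 2 *+ 2 = \sum_i \sum_j (`|a i| * `|a j| *+ 2).
  rewrite expr2 mulr_suml -sumrMnl; apply: eq_bigr => i _.
  by rewrite mulr_sumr -sumrMnl.
apply: le_trans (_ : _ <= \sum_i \sum_j (`|a i| ^+ 2 + `|a j| ^+ 2)) _.
  apply: ler_sum => i _; apply: ler_sum => j _.
  exact: (real_leif_mean_square_scaled (normr_real _) (normr_real _)).1.
under eq_bigr do rewrite big_split /= sumr_const card_ord.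
by rewrite big_split /= sumrMnl sumr_const card_ord mulr_natl mulr2n.
Qed.

Lemma gap_damping n (u d : 'I_n -> R) (lam e delta : R) (I : pred 'I_n) :
  0 <= delta -> (forall i, I i -> delta <= `|d i - lam|) ->
  \sum_i `|(d i - lam) * u i| ^+ 2 <= e ^+ 2 ->
  delta ^+ 2 * \sum_(i | I i) `|u i| ^+ 2 <= e ^+ 2.
Proof.
move=> delta_ge0 gap resid; apply: le_trans resid; rewrite mulr_sumr.
apply: le_trans (_ : _ <= \sum_(i | I i) `|(d i - lam) * u i| ^+ 2) _.
  apply: ler_sum => i Ii; rewrite normrM exprMn ler_wpM2r ?exprn_ge0 //.
  by rewrite ler_sqr ?nnegrE ?gap ?(le_trans delta_ge0 (gap i Ii)).
rewrite [X in _ <= X](bigID I) /= lerDl.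
by rewrite sumr_ge0 // => i _; rewrite exprn_ge0.
Qed.

(* The damping passes to linear combinations of damped vectors, at the
   cost of a factor m from Cauchy-Schwarz. *)
Lemma comb_damping m n (w : 'I_m -> 'I_n -> R) (c : 'I_m -> R)
    (I : pred 'I_n) (delta e : R) :
  0 <= delta ->
  (forall j, c j != 0 -> delta ^+ 2 * \sum_(i | I i) `|w j i| ^+ 2 <= e ^+ 2) ->
  delta ^+ 2 * \sum_(i | I i) `|\sum_j c j * w j i| ^+ 2 <=
    m%:R * (e ^+ 2 * \sum_j `|c j| ^+ 2).
Proof.
move=> delta_ge0 damped; rewrite mulr_sumr.
apply: le_trans (_ : _ <= \sum_(i | I i)
    delta ^+ 2 * (m%:R * \sum_j `|c j| ^+ 2 * `|w j i| ^+ 2)) _.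
  apply: ler_sum => i _; rewrite ler_wpM2l ?exprn_ge0 //.
  apply: le_trans (sqr_norm_sum_le _) _.
  by under eq_bigr do rewrite normrM exprMn.
have -> : \sum_(i | I i) delta ^+ 2 * (m%:R * \sum_j `|c j| ^+ 2 * `|w j i| ^+ 2) =
    \sum_j m%:R * (`|c j| ^+ 2 * (delta ^+ 2 * \sum_(i | I i) `|w j i| ^+ 2)).
  under eq_bigr do rewrite !mulr_sumr; rewrite exchange_big.
  apply: eq_bigr => j _; rewrite !mulr_sumr; apply: eq_bigr => i _.
  by rewrite mulrCA; congr (_ * _); rewrite mulrCA.
rewrite !mulr_sumr; apply: ler_sum => j _; rewrite ler_wpM2l // mulrC.
have [cj0|cj_neq0] := eqVneq (c j) 0; first by rewrite cj0 normr0 expr0n !mulr0.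
by rewrite ler_wpM2r ?exprn_ge0 ?damped.
Qed.

End NormEstimates.

Section Closeness.
Variable C : numClosedFieldType.

Lemma parseval m n (w : 'I_m -> 'I_n -> C) (c : 'I_m -> C) :
  (forall a b, \sum_i (w a i)^* * w b i = (a == b)%:R) ->
  \sum_i `|\sum_j c j * w j i| ^+ 2 = \sum_j `|c j| ^+ 2.
Proof.
move=> ortho; under eq_bigr do rewrite normCKC; under [RHS]eq_bigr do rewrite normCKC.
transitivity (\sum_i \sum_a \sum_b ((c a)^* * c b * ((w a i)^* * w b i))).
  apply: eq_bigr => i _; rewrite rmorph_sum mulr_suml; apply: eq_bigr => a _.
  by rewrite mulr_sumr; apply: eq_bigr => b _; rewrite rmorphM mulrACA.
rewrite exchange_big; apply: eq_bigr => a _; rewrite exchange_big /=.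
under eq_bigr do rewrite -mulr_sumr ortho.
rewrite (bigD1 a) //= eqxx mulr1 big1 ?addr0 // => b.
by rewrite eq_sym => /negPf->; rewrite mulr0.
Qed.

(* Otherwise a nonzero combination y of the w_j (j in J) vanishes on the
   neighbourhood N of J; off N its mass is damped by the gap 2me, which
   forces e = 0, and then y vanishes off N as well. *)
Lemma closeness_hall_cond m n (w : 'I_m -> 'I_n -> C) (d : 'I_n -> C)
    (lam : 'I_m -> C) (e : C) :
  (0 < m)%N -> 0 <= e ->
  (forall a b, \sum_i (w a i)^* * w b i = (a == b)%:R) ->
  (forall j, \sum_i `|(d i - lam j) * w j i| ^+ 2 <= e ^+ 2) ->
  forall J : {set 'I_m},
    (#|J| <= #|nbh (fun j i => `|lam j - d i| <= 2 * m%:R * e)%R J|)%N.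
Proof.
move=> m_gt0 e_ge0 ortho resid J; rewrite leqNgt; apply/negP.
set N := nbh _ J => deficient.
have far i j : i \notin N -> j \in J -> 2 * m%:R * e < `|d i - lam j|.
  move=> iN jJ; rewrite distrC real_ltNge ?ger0_real ?mulr_ge0 //.
  by apply: contra iN; apply: mem_nbh.
have [c [[j0 c_j0] cJ cN]] := kernel_comb w deficient.
pose y i := \sum_j c j * w j i.
pose S := \sum_j `|c j| ^+ 2.
have S_gt0 : 0 < S.
  rewrite /S (bigD1 j0) //= ltr_pwDl ?exprn_gt0 ?normr_gt0 //.
  by rewrite sumr_ge0 // => j _; rewrite exprn_ge0.
(* y vanishes on N, so all its mass S (Parseval) lies off N. *)
have S_offN : S = \sum_(i | i \notin N) `|y i| ^+ 2.
  rewrite /S -(parseval c ortho) (bigID (fun i => i \notin N)) /=.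
  rewrite [X in _ + X]big1 ?addr0 // => i.
  by rewrite negbK => /cN->; rewrite normr0 expr0n.
have inJ j : c j != 0 -> j \in J by apply: contraR => jJ; rewrite cJ ?inE.
have bound : (2 * m%:R * e) ^+ 2 * S <= m%:R * (e ^+ 2 * S).
  have gap_ge0 : 0 <= 2 * m%:R * e by rewrite !mulr_ge0.
  rewrite {1}S_offN; apply: comb_damping => // j /inJ jJ.
  by apply: gap_damping (resid j) => // i iN; apply/ltW/far.
have e_eq0 : e = 0.
  have [//|e_neq0] := eqVneq e 0; exfalso; move: bound.
  have eS_gt0 : 0 < e ^+ 2 * S by rewrite mulr_gt0 ?exprn_gt0 // lt_def e_neq0.
  rewrite exprMn -mulrA ler_pM2r // -natrM -natrX ler_nat; nia.
(* With e = 0, each w_j (j in J) vanishes off N, hence so does y. *)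
have y_offN i : i \notin N -> y i = 0.
  move=> iN; apply: big1 => j _.
  have [cj0|/inJ jJ] := eqVneq (c j) 0; first by rewrite cj0 mul0r.
  have resid0 : \sum_i `|(d i - lam j) * w j i| ^+ 2 = 0.
    apply/eqP; rewrite eq_le sumr_ge0 ?andbT => [|k _]; last exact: exprn_ge0.
    by have := resid j; rewrite e_eq0 expr0n.
  have /eqP := psumr_eq0P (fun k _ => exprn_ge0 2 (normr_ge0 _)) resid0 (i := i) isT.
  rewrite sqrf_eq0 normr_eq0 mulf_eq0 => /orP[/eqP gap0|/eqP->]; last by rewrite mulr0.
  by have := far i j iN jJ; rewrite e_eq0 mulr0 gap0 normr0 ltxx.
by move: S_gt0; rewrite S_offN big1 ?ltxx // => i /y_offN->; rewrite normr0 expr0n.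
Qed.

End Closeness.

Section UnitaryCoordinates.
Variable C : numClosedFieldType.
Local Open Scope sesquilinear_scope.

Lemma ctrmxE m n (M : 'M[C]_(m, n)) : ctrmx M = M ^t*.
Proof. by rewrite /ctrmx map_trmx. Qed.

Lemma ctrmxM m n p (M : 'M[C]_(m, n)) (N : 'M[C]_(n, p)) :
  ctrmx (M *m N) = ctrmx N *m ctrmx M.
Proof. by rewrite /ctrmx map_mxM trmx_mul. Qed.

Lemma cdotE n (u u' : 'cV[C]_n) : cdot u u' = \sum_i (u i 0)^* * u' i 0.
Proof. by rewrite /cdot mxE; apply: eq_bigr => i _; rewrite !mxE. Qed.

Lemma norm2_sqr n (u : 'cV[C]_n) : norm2 u ^+ 2 = cdot u u.
Proof. by rewrite sqrtCK cdotE; apply: eq_bigr => i _; rewrite normCKC. Qed.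

Lemma cdot_unitary n (P : 'M[C]_n) (u u' : 'cV[C]_n) : P \is unitarymx ->
  cdot (P *m u) (P *m u') = cdot u u'.
Proof.
move=> /unitarymxP /mulmx1C PtP.
by rewrite /cdot ctrmxM -mulmxA (mulmxA (ctrmx P)) [ctrmx P]ctrmxE PtP mul1mx.
Qed.

Lemma char_poly_similar n (P M : 'M[C]_n) : P \in unitmx ->
  char_poly (invmx P *m M *m P) = char_poly M.
Proof.
move=> Pu; rewrite /char_poly /char_poly_mx.
pose Pi := map_mx (@polyC C) (invmx P); pose P' := map_mx (@polyC C) P.
have PiP : Pi *m P' = 1%:M by rewrite -map_mxM mulVmx // map_mx1.
have -> : 'X%:M - map_mx (@polyC C) (invmx P *m M *m P) =
    Pi *m ('X%:M - map_mx (@polyC C) M) *m P'.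
  rewrite !map_mxM mulmxBr mulmxBl -/Pi -/P'; congr (_ - _).
  by rewrite scalar_mxC -mulmxA PiP mulmx1.
by rewrite !det_mulmx mulrAC -det_mulmx PiP det1 mul1r.
Qed.

Lemma char_poly_diag_similar n (P : 'M[C]_n) (d : 'rV[C]_n) : P \in unitmx ->
  char_poly (invmx P *m diag_mx d *m P) = \prod_(i < n) ('X - (d 0 i)%:P).
Proof.
move=> Pu; rewrite char_poly_similar // char_poly_trig ?diag_mx_is_trig //.
by apply: eq_bigr => i _; rewrite mxE eqxx mulr1n.
Qed.

Lemma residual_coords n (P A : 'M[C]_n) (d : 'rV[C]_n) (lam : C) (u : 'cV[C]_n) i :
  P \in unitmx -> A = invmx P *m diag_mx d *m P ->
  (P *m ((A - lam *: 1%:M) *m u)) i 0 = (d 0 i - lam) * (P *m u) i 0.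
Proof.
move=> Pu ->; rewrite mulmxBl mulmxBr -scalemxAl mul1mx -scalemxAr !mulmxA.
by rewrite mulmxV // mul1mx -mulmxA mul_diag_mx !mxE mulrBl.
Qed.

End UnitaryCoordinates.

Theorem theorem4p2 (R : realType) (m n : nat) (Hm : (0 < m)%N) (Hmn : (m <= n)%N)
  (A : 'M[R[i]]_n) (HA : hermitian_mx A)
  (v : 'I_m -> 'cV[R[i]]_n) (Hv : orthonormal_fam v)
  (lambda : 'I_m -> R[i]) (Hlam : forall j, lambda j \is Num.real)
  (r : 'I_m -> 'cV[R[i]]_n)
  (Hr : forall j, (A - lambda j *: 1%:M) *m v j = r j) :
  exists s : n.-tuple R[i], eigenvalues_with_mult A s /\
  exists sigma : 'I_m -> 'I_n, injective sigma /\
    forall j : 'I_m,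
      `|lambda j - tnth s (sigma j)| <=
        2 * m%:R * \big[Num.max/0]_(i < m) norm2 (r i).
Proof.
have /orthomx_spectralP hA : A \is normalmx.
  by apply/normalmxP; rewrite -ctrmxE HA.
set P := spectralmx A in hA; set d := spectral_diag A in hA.
have Pu : P \in unitmx := spectral_unit A.
exists [tuple d 0 i | i < n]; split.
  by rewrite /eigenvalues_with_mult {1}hA char_poly_diag_similar // big_tuple;
     apply: eq_bigr => i _; rewrite tnth_mktuple.
set e := \big[Num.max/0]_(i < m) norm2 (r i).
have norm2_ge0 j : 0 <= norm2 (r j) by rewrite sqrtC_ge0 sumr_ge0 // => *; rewrite exprn_ge0.
pose w j i := (P *m v j) i 0.
have ortho a b : \sum_i (w a i)^* * w b i = (a == b)%:R.
  by rewrite -Hv -(cdot_unitary _ _ (spectral_unitarymx A)) cdotE.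
have resid j : \sum_i `|(d 0 i - lambda j) * w j i| ^+ 2 <= e ^+ 2.
  under eq_bigr do rewrite -(residual_coords _ _ _ Pu hA) Hr normCKC.
  rewrite -cdotE cdot_unitary ?spectral_unitarymx // -norm2_sqr.
  by rewrite ler_sqr ?nnegrE ?bigmax_ge0 // le_bigmax_nneg.
have [sigma [sigma_inj close]] := hall (Ordinal (leq_trans Hm Hmn))
  (closeness_hall_cond Hm (bigmax_ge0 _ norm2_ge0) ortho resid).
by exists sigma; split=> // j; rewrite tnth_mktuple; apply: close.
Qed.
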